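(* Let $C$ be a coalgebra over a field $k$ with a coradical basis $\mathcal B$, and let $M$ be a finite dimensional local right coideal of $C$ which is $\mathcal B$-supported. Then the set $(\mathcal B\cap M)\setminus \mathrm{Jac}(M)$ is nonempty, and $M$ is generated as a right $C$-comodule by any element of this set.
   Context: The coradical $C_0$ of $C$ is the sum of all simple subcoalgebras of $C$. For subspaces $U,V\subseteq C$, $U\wedge V=\Delta^{-1}(U\otimes C+C\otimes V)$. The coradical filtration is $C_0\subseteq C_1\subseteq\cdots$ with $C_n=C_0\wedge C_{n-1}$ for $n\geq1$. A coradical basis of $C$ is a $k$-basis $\mathcal B$ of $C$ such that $\mathcal B\cap C_n$ is a basis of $C_n$ for all $n$. A right coideal $M$ (a right subcomodule of $C$) is $\mathcal B$-supported if $\mathcal B\cap M$ is a $k$-basis of $M$. A nonzero comodule is local if it has a unique maximal subcomodule. $\mathrm{Jac}(M)$ denotes the Jacobson radical of $M$ (the intersection of its maximal subcomodules). *)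

From HB Require Import structures.
From mathcomp Require Import all_boot all_order all_algebra.
From mathcomp Require Import finmap.
Set Implicit Arguments. Unset Strict Implicit. Unset Printing Implicit Defensive.
Import GRing.Theory.
Local Open Scope ring_scope.

(* A coalgebra C over a field k, presented through a k-basis indexed by B:
   C = k^(B) (finitely supported functions B -> k), and
   C (x) C = k^(B x B), u (x) c = ((b1,b2) |-> u b1 * c b2).
   Comultiplication: Delta(e_b) = sum_p cdelta b p  e_{p.1} (x) e_{p.2};
   counit: eps(e_b) = ceps b.  The axioms are coassociativity and the
   two counit laws, written coefficientwise on basis elements. *)
Record coalgebra (k : fieldType) (B : choiceType) := Coalgebra {
  cdelta : B -> {fsfun (B * B)%type -> k with 0};
  ceps : B -> k;
  cdelta_coassoc : forall b b1 b2 b3 : B,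
    \sum_(p <- finsupp (cdelta b)) (p.2 == b3)%:R * cdelta b p * cdelta p.1 (b1, b2)
    = \sum_(p <- finsupp (cdelta b)) (p.1 == b1)%:R * cdelta b p * cdelta p.2 (b2, b3);
  ceps_counitl : forall b b2 : B,
    \sum_(p <- finsupp (cdelta b)) (p.2 == b2)%:R * ceps p.1 * cdelta b p = (b == b2)%:R;
  ceps_counitr : forall b b1 : B,
    \sum_(p <- finsupp (cdelta b)) (p.1 == b1)%:R * ceps p.2 * cdelta b p = (b == b1)%:R
}.

Section Coalg.
Variables (k : fieldType) (B : choiceType) (CC : coalgebra k B).

Definition elt := {fsfun B -> k with 0}.

Inductive inspan (X : Type) (S : (X -> k) -> Prop) : (X -> k) -> Prop :=
| inspan0 f : (forall x, f x = 0) -> inspan S f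
| inspanS f g h (a : k) : S g -> inspan S h ->
    (forall x, f x = a * g x + h x) -> inspan S f.

Definition spanC (S : elt -> Prop) (v : elt) : Prop :=
  inspan (fun f : B -> k => exists u : elt, S u /\ forall b, f b = u b) v.

Definition Delta (v : elt) : (B * B)%type -> k :=
  fun p => \sum_(b <- finsupp v) v b * cdelta CC b p.

Definition subspace (U : elt -> Prop) : Prop :=
  (forall w : elt, (forall b, w b = 0) -> U w) /\
  (forall (a : k) (u v w : elt), U u -> U v ->
     (forall b, w b = a * u b + v b) -> U w).

Definition is_zero (U : elt -> Prop) : Prop := forall x, U x -> forall b, x b = 0.
Definition subset (U V : elt -> Prop) : Prop := forall x, U x -> V x.

Definition tens_span (U V : elt -> Prop) : ((B * B)%type -> k) -> Prop :=
  inspan (fun t => exists u v : elt, U u /\ V v /\ forall p, t p = u p.1 * v p.2).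

Definition allC : elt -> Prop := fun _ => True.

Definition subcoalgebra (D : elt -> Prop) : Prop :=
  subspace D /\ forall x, D x -> tens_span D D (Delta x).

Definition simple_subcoalgebra (D : elt -> Prop) : Prop :=
  subcoalgebra D /\ ~ is_zero D /\
  forall E, subcoalgebra E -> subset E D -> is_zero E \/ subset D E.

Definition coradical : elt -> Prop :=
  spanC (fun w => exists D, simple_subcoalgebra D /\ D w).

(* U /\ V = Delta^{-1}(U (x) C + C (x) V) *)
Definition wedge (U V : elt -> Prop) : elt -> Prop :=
  fun x => inspan (fun t =>
     (exists u c : elt, U u /\ forall p, t p = u p.1 * c p.2) \/
     (exists c v : elt, V v /\ forall p, t p = c p.1 * v p.2)) (Delta x).

Fixpoint corad_filt (n : nat) : elt -> Prop :=
  match n with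
  | 0 => coradical
  | n'.+1 => wedge coradical (corad_filt n')
  end.

Definition is_basis_vec (b : B) (w : elt) : Prop := forall x, w x = (x == b)%:R.

(* B /\ U spans U (B is a basis of C, so B /\ U is then a basis of U) *)
Definition B_supported (U : elt -> Prop) : Prop :=
  forall v, U v -> spanC (fun w => U w /\ exists b, is_basis_vec b w) v.

Definition coradical_basis : Prop := forall n, B_supported (corad_filt n).

Definition right_coideal (M : elt -> Prop) : Prop :=
  subspace M /\ forall x, M x -> tens_span M allC (Delta x).

Definition finite_dim (M : elt -> Prop) : Prop :=
  exists s : seq elt, forall v, M v -> spanC (fun w => w \in s) v.

Definition subcomodule (M N : elt -> Prop) : Prop :=
  subset N M /\ right_coideal N.

Definition maximal_subcomodule (M N : elt -> Prop) : Prop :=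
  subcomodule M N /\ ~ subset M N /\
  forall N', subcomodule M N' -> subset N N' -> subset N' N \/ subset M N'.

Definition local_comodule (M : elt -> Prop) : Prop :=
  ~ is_zero M /\
  exists N, maximal_subcomodule M N /\
    forall N', maximal_subcomodule M N' -> subset N N' /\ subset N' N.

Definition Jac (M : elt -> Prop) : elt -> Prop :=
  fun x => M x /\ forall N, maximal_subcomodule M N -> N x.

Definition generated_by (M : elt -> Prop) (x : elt) : Prop :=
  M x /\ forall N, subcomodule M N -> N x -> subset M N.

End Coalg.

From Pilot Require Import Defs.
From HB Require Import structures.
From mathcomp Require Import all_boot all_order all_algebra.
From mathcomp Require Import finmap.
From Stdlib Require Import Classical.
Set Implicit Arguments. Unset Strict Implicit. Unset Printing Implicit Defensive.
Import GRing.Theory.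
Local Open Scope ring_scope.

(* M is spanned by its basis vectors, so they cannot all lie in the unique
   maximal subcomodule J = Jac M.  Conversely, a finite dimensional comodule
   has every proper subcomodule inside a maximal one, which for M can only be
   J; so a subcomodule containing some w outside J is all of M.  Neither part
   uses that B is a coradical basis or that M is a right coideal. *)

Section Spans.
Variables (k : fieldType) (B : choiceType).
Implicit Types (U G : elt k B -> Prop) (u v w : elt k B).

Definition generator G (f : B -> k) : Prop := exists u, G u /\ forall b, f b = u b.

Definition lincomb (a : k) u v : elt k B :=
  [fsfun x in (finsupp u `|` finsupp v)%fset => a * u x + v x].

Lemma lincombE a u v b : lincomb a u v b = a * u b + v b.
Proof.
rewrite fsfun_fun in_fsetU !mem_finsupp; case: ifP => // /negbT.
by rewrite negb_or !negbK => /andP[/eqP -> /eqP ->]; rewrite mulr0 addr0.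
Qed.

Lemma subspace0 U : subspace U -> exists2 u, U u & forall b, u b = 0.
Proof.
case=> U0 _; exists (lincomb 0 [fsfun] [fsfun]) => [|b]; last first.
  by rewrite lincombE !fsfunE mul0r add0r.
by apply: U0 => b; rewrite lincombE !fsfunE mul0r add0r.
Qed.

Lemma subspace_eq U u w : subspace U -> U u -> (forall b, u b = w b) -> U w.
Proof.
move=> sU Uu uw; have [z Uz z0] := subspace0 sU.
by apply: (sU.2 1 u z w Uu Uz) => b; rewrite z0 mul1r addr0.
Qed.

Lemma inspan_subspace U G (f : B -> k) :
  subspace U -> (forall u, G u -> U u) -> inspan (generator G) f ->
  exists2 u, U u & forall b, u b = f b.
Proof.
move=> sU GU; elim=> [{}f f0 | {}f g h a [ug [Gug ugE]] _ [uh Uuh uhE] fE].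
  by have [z Uz z0] := subspace0 sU; exists z => // b; rewrite f0.
exists (lincomb a ug uh); last by move=> b; rewrite lincombE fE ugE uhE.
by apply: (sU.2 a ug uh _ (GU _ Gug) Uuh) => b; rewrite lincombE.
Qed.

Lemma spanC_subspace U G v :
  subspace U -> (forall u, G u -> U u) -> spanC G v -> U v.
Proof.
by move=> sU GU /(inspan_subspace sU GU) [u Uu uv]; apply: subspace_eq sU Uu uv.
Qed.

End Spans.

Section Coordinates.
Variables (k : fieldType) (B : choiceType) (sb : seq B).
Implicit Types (P G : elt k B -> Prop) (f g : B -> k).

Definition supported_on f : Prop := forall b, b \notin sb -> f b = 0.

Definition coords f : 'rV[k]_(size sb) := \row_(i < size sb) f (tnth (in_tuple sb) i).

Definition coords_span (L : seq (elt k B)) : {vspace 'rV[k]_(size sb)} :=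
  <<map (fun u : elt k B => coords u) L>>%VS.

Lemma coords_inj f g :
  supported_on f -> supported_on g -> coords f = coords g -> forall b, f b = g b.
Proof.
move=> f0 g0 /rowP fg b; have [/seq_tnthP [i ->] | bn] := boolP (b \in sb).
  by have := fg i; rewrite !mxE.
by rewrite f0 ?g0.
Qed.

Lemma coords_spanP G (L : seq (elt k B)) r :
  (forall u, u \in L -> G u) -> r \in coords_span L ->
  exists2 f, inspan (generator G) f & coords f = r.
Proof.
rewrite /coords_span; elim: L r => [|x L IH] r LG /=.
  rewrite span_nil memv0 => /eqP ->; exists (fun _ => 0); first exact: inspan0.
  by apply/rowP => i; rewrite !mxE.
rewrite span_cons => /memv_addP [_ /vlineP [a ->] [r2 /IH r2L ->]].
have [f Lf <-] : exists2 f, inspan (generator G) f & coords f = r2.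
  by apply: r2L => u uL; apply: LG; rewrite inE uL orbT.
exists (fun b => a * x b + f b); last by apply/rowP => i; rewrite !mxE.
apply: (@inspanS _ _ _ _ (fun b => x b) f a) => //.
by exists x; split => //; apply: LG; rewrite inE eqxx.
Qed.

Lemma subspace_coords_span P (L : seq (elt k B)) (v : elt k B) :
  subspace P -> (forall u, P u -> supported_on u) -> (forall u, u \in L -> P u) ->
  supported_on v -> coords v \in coords_span L -> P v.
Proof.
move=> sP Psupp LP v0 /(coords_spanP LP) [f Lf fv].
have [u Pu uf] := inspan_subspace sP (fun u Pu => Pu) Lf.
apply: (subspace_eq sP Pu); apply: coords_inj (Psupp u Pu) v0 _.
by rewrite -fv; apply/rowP => i; rewrite !mxE.
Qed.

Lemma memv_coords_full (U : {vspace 'rV[k]_(size sb)}) f :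
  (size sb <= \dim U)%N -> coords f \in U.
Proof.
move=> dimU; suff -> : U = fullv by apply: memvf.
apply/eqP; rewrite eqEdim subvf dimvf (@dim_matrix k 1 (size sb)) mul1r.
exact: dimU.
Qed.

Lemma dim_coords_span_cons (L : seq (elt k B)) (v : elt k B) :
  coords v \notin coords_span L ->
  (\dim (coords_span L) < \dim (coords_span (v :: L)))%N.
Proof.
move=> v_new; rewrite /coords_span /= span_cons -/(coords_span L).
rewrite (ltn_leqif (dimv_leqif_eq (addvSr _ _))); apply: contra v_new => /eqP ->.
by rewrite (subvP (addvSl _ _)) // memv_line.
Qed.

End Coordinates.

Lemma finite_dim_supported (k : fieldType) (B : choiceType) (M : elt k B -> Prop) :
  finite_dim M -> exists sb : seq B, forall v, M v -> supported_on sb v.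
Proof.
move=> [s sM]; exists (flatten [seq enum_fset (finsupp u) | u <- s]).
move=> v /sM Mv b bn; elim: Mv => [f f0 | f g h a [u [us ug]] _ hb fE].
  exact: f0.
rewrite fE hb ug addr0; suff /eqP -> : u b == 0 by rewrite mulr0.
by rewrite -[_ == 0]negbK -mem_finsupp; apply: contra bn => bu; apply/flatten_mapP; exists u.
Qed.

Section MaximalSubcomodules.
Variables (k : fieldType) (B : choiceType) (CC : coalgebra k B) (M : elt k B -> Prop).

Lemma not_maximal_subcomodule_extend P :
  subcomodule CC M P -> ~ Defs.subset M P -> ~ maximal_subcomodule CC M P ->
  exists N v, [/\ subcomodule CC M N, Defs.subset P N, ~ Defs.subset M N, N v & ~ P v].
Proof.
move=> sP nMP nmaxP; apply: NNPP => noN; apply: nmaxP; split=> //; split=> // N sN PN.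
apply: NNPP => /not_or_and [nNP nMN]; apply: nNP => v Nv; apply: NNPP => nPv.
by apply: noN; exists N, v.
Qed.

Variable sb : seq B.
Hypothesis M_supp : forall v, M v -> supported_on sb v.

Lemma not_maximal_subcomodule_extend_coords P (L : seq (elt k B)) :
  subcomodule CC M P -> ~ Defs.subset M P -> ~ maximal_subcomodule CC M P ->
  (forall u, u \in L -> P u) ->
  exists N v, [/\ subcomodule CC M N, Defs.subset P N, ~ Defs.subset M N, N v
                 & coords sb v \notin coords_span sb L].
Proof.
move=> sP nMP nmaxP LP.
have [N [v [sN PN nMN Nv nPv]]] := not_maximal_subcomodule_extend sP nMP nmaxP.
exists N, v; split=> //; apply/negP => vL; apply: nPv.
apply: (subspace_coords_span sP.2.1 _ LP _ vL) => [u /sP.1 /M_supp // |].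
exact/M_supp/sN.1.
Qed.

(* Induction on the slack m: a non-maximal P gains a vector whose coordinates
   escape the span of L, so that span grows and can never exceed size sb. *)
Lemma maximal_subcomodule_above_codim (m : nat) P (L : seq (elt k B)) :
  subcomodule CC M P -> ~ Defs.subset M P -> (forall u, u \in L -> P u) ->
  (size sb <= \dim (coords_span sb L) + m)%N ->
  exists2 N, maximal_subcomodule CC M N & Defs.subset P N.
Proof.
elim: m P L => [|m IH] P L sP nMP LP dimL.
all: case: (classic (maximal_subcomodule CC M P)) => [maxP | nmaxP]; first by exists P.
all: have [N [v [sN PN nMN Nv v_new]]] := not_maximal_subcomodule_extend_coords sP nMP nmaxP LP.
  by rewrite addn0 in dimL; rewrite memv_coords_full in v_new.
have vLN u : u \in v :: L -> N u by rewrite inE => /orP [/eqP -> // | /LP /PN].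
have dim_vL : (size sb <= \dim (coords_span sb (v :: L)) + m)%N.
  apply: leq_trans dimL _; rewrite addnS -addSn leq_add2r.
  exact: dim_coords_span_cons.
have [N' maxN' NN'] := IH N (v :: L) sN nMN vLN dim_vL.
by exists N' => // u /PN /NN'.
Qed.

Lemma maximal_subcomodule_above P :
  subcomodule CC M P -> ~ Defs.subset M P ->
  exists2 N, maximal_subcomodule CC M N & Defs.subset P N.
Proof.
move=> sP nMP; apply: (@maximal_subcomodule_above_codim (size sb) P [::]) => //.
exact: leq_addl.
Qed.

End MaximalSubcomodules.

Section LocalComodules.
Variables (k : fieldType) (B : choiceType) (CC : coalgebra k B) (M : elt k B -> Prop).

Lemma B_supported_basis_vec N :
  B_supported M -> subspace N -> ~ Defs.subset M N ->
  exists b w, is_basis_vec b w /\ M w /\ ~ N w.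
Proof.
move=> BSM sN nMN; apply: NNPP => noB; apply: nMN => v /BSM.
apply: spanC_subspace sN _ => u [Mu [b bu]]; apply: NNPP => nNu.
by apply: noB; exists b, u.
Qed.

Lemma local_Jac N w :
  local_comodule CC M -> maximal_subcomodule CC M N -> M w -> N w -> Jac CC M w.
Proof.
move=> [_ [J [_ uniqJ]]] maxN Mw Nw; split=> // N' /uniqJ [JN' _].
by apply: JN'; have [_] := uniqJ N maxN; apply.
Qed.

Lemma generated_by_notin_Jac w :
  finite_dim M -> local_comodule CC M -> M w -> ~ Jac CC M w -> generated_by CC M w.
Proof.
move=> /finite_dim_supported [sb M_supp] locM Mw nJw; split=> // N sN Nw.
apply: NNPP => nMN; have [N' maxN' NN'] := maximal_subcomodule_above M_supp sN nMN.
exact/nJw/(local_Jac locM maxN' Mw)/NN'.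
Qed.

End LocalComodules.

Theorem mainTheorem3 (k : fieldType) (B : choiceType) (CC : coalgebra k B)
  (M : elt k B -> Prop) :
  coradical_basis CC ->
  right_coideal CC M -> finite_dim M -> local_comodule CC M ->
  B_supported M ->
  (exists (b : B) (w : elt k B), is_basis_vec b w /\ M w /\ ~ Jac CC M w) /\
  (forall (b : B) (w : elt k B), is_basis_vec b w -> M w -> ~ Jac CC M w ->
     generated_by CC M w).
Proof.
move=> _ _ fdM locM BSM; split=> [|b w _]; last exact: generated_by_notin_Jac.
have [_ [J [maxJ _]]] := locM.
have [b [w [bw [Mw nJw]]]] := B_supported_basis_vec BSM maxJ.1.2.1 maxJ.2.1.
by exists b, w; split=> //; split=> // [[_ /(_ J maxJ)]].
Qed.
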